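(* Let $\mathcal{P}_1,\mathcal{P}_2$ be finite posets and let $\mathbf{T}\in\mathbb{R}^{\mathcal{P}_1\times\mathcal{P}_2}$ be a matrix with finite ND rank. Then $\mathrm{NDrank}(\mathbf{T})$ is at least the minimum number $s$ of elements $\mathbf{v}_1,\dots,\mathbf{v}_s\in\mathcal{C}(\mathcal{P}_1)$ needed for $\mathbf{T}(\mathcal{C}(\mathcal{P}_2)^* )\subseteq\mathrm{cone}(\mathbf{v}_1,\dots,\mathbf{v}_s)$.
   Context: For a finite poset $\mathcal{Q}$, the order cone $\mathcal{C}(\mathcal{Q})\subset\mathbb{R}^{\mathcal{Q}}$ is the set of $\mathbf{f}$ with $f_x\ge0$ for all $x$ and $f_x\le f_y$ whenever $x\preceq y$. The dual cone of $\mathcal{C}\subset\mathbb{R}^p$ is $\mathcal{C}^*=\{\mathbf{a}:\mathbf{a}^\intercal\mathbf{x}\ge0\ \forall\mathbf{x}\in\mathcal{C}\}$. The matrix $\mathbf{T}$ acts as a linear map $\mathbb{R}^{\mathcal{P}_2}\to\mathbb{R}^{\mathcal{P}_1}$, and $\mathbf{T}(\mathcal{C}(\mathcal{P}_2)^* )=\{\mathbf{T}\boldsymbol\beta:\boldsymbol\beta\in\mathcal{C}(\mathcal{P}_2)^*\}$. $\mathrm{cone}(\cdot)$ is the conical hull. $\mathrm{NDrank}(\mathbf{T})$ is the minimal $r$ with $\mathbf{T}=\sum_{i=1}^r\mathbf{a}_i\mathbf{b}_i^\intercal$, $\mathbf{a}_i\in\mathcal{C}(\mathcal{P}_1)$,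 $\mathbf{b}_i\in\mathcal{C}(\mathcal{P}_2)$. *)

From HB Require Import structures.
From mathcomp Require Import all_boot all_order all_algebra.
From mathcomp Require Import reals.
Set Implicit Arguments. Unset Strict Implicit. Unset Printing Implicit Defensive.
Import Order.TTheory GRing.Theory Num.Theory.
Local Open Scope ring_scope.

Definition order_cone (R : realType) (d : Order.disp_t) (Q : finPOrderType d)
  (f : Q -> R) : Prop :=
  (forall x, 0 <= f x) /\ (forall x y : Q, (x <= y)%O -> f x <= f y).

Definition dual_order_cone (R : realType) (d : Order.disp_t) (Q : finPOrderType d)
  (a : Q -> R) : Prop :=
  forall x : Q -> R, order_cone x -> 0 <= \sum_(q : Q) a q * x q.

Definition mat_app (R : realType) (P1 P2 : finType) (T : P1 -> P2 -> R)
  (beta : P2 -> R) : P1 -> R :=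
  fun i => \sum_(j : P2) T i j * beta j.

Definition in_cone (R : realType) (P : finType) (s : nat) (v : 'I_s -> P -> R)
  (u : P -> R) : Prop :=
  exists c : 'I_s -> R, (forall k, 0 <= c k) /\
    (forall i, u i = \sum_(k < s) c k * v k i).

Definition ND_factorization (R : realType) (d1 d2 : Order.disp_t)
  (P1 : finPOrderType d1) (P2 : finPOrderType d2) (T : P1 -> P2 -> R) (r : nat) : Prop :=
  exists (a : 'I_r -> P1 -> R) (b : 'I_r -> P2 -> R),
    (forall k, order_cone (a k)) /\ (forall k, order_cone (b k)) /\
    (forall i j, T i j = \sum_(k < r) a k i * b k j).

Definition cone_cover (R : realType) (d1 d2 : Order.disp_t)
  (P1 : finPOrderType d1) (P2 : finPOrderType d2) (T : P1 -> P2 -> R) (s : nat) : Prop :=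
  exists v : 'I_s -> P1 -> R, (forall k, order_cone (v k)) /\
    (forall beta : P2 -> R, dual_order_cone beta -> in_cone v (mat_app T beta)).

From HB Require Import structures.
From mathcomp Require Import all_boot all_order all_algebra.
From mathcomp Require Import reals.
Import Order.TTheory GRing.Theory Num.Theory.
Local Open Scope ring_scope.

(* If T = sum_k a_k b_k^T, then T beta = sum_k <beta, b_k> a_k, and <beta, b_k> >= 0
   whenever beta lies in the dual cone and b_k in C(P2).  So the factors a_1, ..., a_r
   themselves span a cone containing the image under T of the dual of C(P2). *)

Lemma mat_app_sum_outer (R : realType) (P1 P2 : finType) (r : nat)
    (a : 'I_r -> P1 -> R) (b : 'I_r -> P2 -> R) (beta : P2 -> R) (i : P1) :
  mat_app (fun i j => \sum_(k < r) a k i * b k j) beta i =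
  \sum_(k < r) (\sum_(j : P2) beta j * b k j) * a k i.
Proof.
rewrite /mat_app; under eq_bigr => j _ do rewrite big_distrl /=.
rewrite exchange_big /=; apply: eq_bigr => k _.
rewrite mulr_suml; apply: eq_bigr => j _.
by rewrite mulrC [a k i * _]mulrC mulrA.
Qed.

Lemma ND_factorization_cone_cover (R : realType) (d1 d2 : Order.disp_t)
    (P1 : finPOrderType d1) (P2 : finPOrderType d2) (T : P1 -> P2 -> R) (r : nat) :
  ND_factorization T r -> cone_cover T r.
Proof.
move=> [a [b [a_cone [b_cone defT]]]].
exists a; split => // beta beta_dual.
exists (fun k => \sum_(j : P2) beta j * b k j); split; first by move=> k; exact: beta_dual.
move=> i; rewrite -mat_app_sum_outer /mat_app.
by apply: eq_bigr => j _; rewrite defT.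
Qed.

Theorem lemma7 (R : realType) (d1 d2 : Order.disp_t)
  (P1 : finPOrderType d1) (P2 : finPOrderType d2) (T : P1 -> P2 -> R)
  (Hfin : exists r, ND_factorization T r) :
  forall r, ND_factorization T r -> exists s, (s <= r)%N /\ cone_cover T s.
Proof.
(* [Hfin] only guarantees the minimum is over a nonempty set; the bound holds for every r. *)
move=> r factT; exists r; split => //.
exact: ND_factorization_cone_cover.
Qed.
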